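(* Let $(L,\le,(\sqsubseteq_\alpha)_{\alpha<\kappa})$ be a model of Axioms 1–4. Let $\alpha<\kappa$ and let $(x_\beta)_{\beta<\alpha}$ be a partial compatible sequence. Let $x=\bigvee_{\beta<\alpha}x_\beta$. Then: - $x$ is the $\le$-least element of $(x]_\alpha$; - $x\sqsubseteq_\alpha z$ for all $z\in(x]_\alpha$; - the sequence $(y_\delta)_{\delta<\kappa}$, defined by $y_\beta=x_\beta$ for $\beta<\alpha$ and $y_\delta=x$ for $\alpha\le\delta<\kappa$, is a compatible sequence.
   Context: Setting (model of Axioms 1–4). Let $(L,\le)$ be a complete lattice with join operation $\bigvee$ and least element $\perp$. Let $\kappa>0$ be an ordinal, and for each ordinal $\alpha<\kappa$ let $\sqsubseteq_\alpha$ be a preorder on $L$. Derived relation: $x=_\alpha y$ means $x\sqsubseteq_\alpha y$ and $y\sqsubseteq_\alpha x$. Derived sets, for $x\in L$ and $\alpha<\kappa$: - $(x]_\alpha=\{y\in L:\forall\beta<\alpha,\ x=_\beta y\}$. - $[x]_\alpha=\{y\in L: x=_\alpha y\}$. For a set $X$, $X\sqsubseteq_\alpha y$ means $x\sqsubseteq_\alpha y$ for all $x\in X$. The structure is a model of Axioms 1–4 if: - (A1) for all $\alpha<\beta<\kappa$, $x\sqsubseteq_\beta y$ implies $x=_\alpha y$; - (A2) $\bigcap_{\alpha<\kappa}=_\alpha$ is the identity relation on $L$; - (A3) for every $x\in L$, every $\alpha<\kappa$ and every $X\subseteq(x]_\alpha$ there is $y\in(x]_\alpha$ with $X\sqsubseteq_\alpha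 y$ such that for all $z\in(x]_\alpha$ with $X\sqsubseteq_\alpha z$ we have $y\sqsubseteq_\alpha z$ and $y\le z$; - (A4) for every nonempty $X\subseteq L$, every $\alpha<\kappa$ and every $y\in L$, if $y=_\alpha x$ for all $x\in X$ then $y=_\alpha\bigvee X$. A sequence $(x_\alpha)_{\alpha<\kappa}$ in $L$ is compatible if each $x_\alpha$ is the $\le$-least element of $[x_\alpha]_\alpha$ and $x_\alpha=_\alpha x_\beta$ for all $\alpha<\beta<\kappa$. For an ordinal $\alpha\le\kappa$, a sequence $(x_\beta)_{\beta<\alpha}$ is a partial compatible sequence if each $x_\beta$ is the $\le$-least element of $[x_\beta]_\beta$ and $x_\beta=_\beta x_\gamma$ for all $\beta<\gamma<\alpha$. *)

From Stdlib Require Import Relations Wellfounded.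

Record CLat := {
  car :> Type;
  le : car -> car -> Prop;
  join : (car -> Prop) -> car;
  le_refl : forall x, le x x;
  le_trans : forall x y z, le x y -> le y z -> le x z;
  le_antisym : forall x y, le x y -> le y x -> x = y;
  join_ub : forall (X : car -> Prop) x, X x -> le x (join X);
  join_least : forall (X : car -> Prop) z, (forall x, X x -> le x z) -> le (join X) z
}.

(* The ordinal kappa > 0, represented by a nonempty well-ordered type
   (the ordinals alpha < kappa). *)
Record WOrd := {
  idx :> Type;
  lt : idx -> idx -> Prop;
  lt_irrefl : forall a, ~ lt a a;
  lt_trans : forall a b c, lt a b -> lt b c -> lt a c;
  lt_total : forall a b, lt a b \/ a = b \/ lt b a;
  lt_wf : well_founded lt;
  idx_inhabited : inhabited idx
}.

Section Model.
Variables (L : CLat) (K : WOrd) (pre : K -> L -> L -> Prop).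

Definition eqa (a : K) (x y : L) : Prop := pre a x y /\ pre a y x.
(* y \in (x]_a *)
Definition downset (a : K) (x y : L) : Prop := forall b, lt K b a -> eqa b x y.
(* y \in [x]_a *)
Definition cls (a : K) (x y : L) : Prop := eqa a x y.

Definition least_in (S : L -> Prop) (x : L) : Prop :=
  S x /\ forall y, S y -> le L x y.

Definition is_model : Prop :=
  (forall a x, pre a x x) /\
  (forall a x y z, pre a x y -> pre a y z -> pre a x z) /\
  (* A1 *)
  (forall a b x y, lt K a b -> pre b x y -> eqa a x y) /\
  (* A2 *)
  (forall x y, (forall a, eqa a x y) <-> x = y) /\
  (* A3 *)
  (forall (x : L) (a : K) (X : L -> Prop),
      (forall y, X y -> downset a x y) ->
      exists y, downset a x y /\ (forall w, X w -> pre a w y) /\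
        (forall z, downset a x z -> (forall w, X w -> pre a w z) ->
                   pre a y z /\ le L y z)) /\
  (* A4 *)
  (forall (X : L -> Prop) (a : K) (y : L),
      (exists x, X x) -> (forall x, X x -> eqa a y x) -> eqa a y (join L X)).

(* (s_b)_{b < alpha} is a partial compatible sequence (values of s at b >= alpha irrelevant) *)
Definition partial_compatible (alpha : K) (s : K -> L) : Prop :=
  (forall b, lt K b alpha -> least_in (cls b (s b)) (s b)) /\
  (forall b c, lt K b c -> lt K c alpha -> eqa b (s b) (s c)).

Definition compatible (s : K -> L) : Prop :=
  (forall b, least_in (cls b (s b)) (s b)) /\
  (forall b c, lt K b c -> eqa b (s b) (s c)).

End Model.


(* Let (x_b)_{b<alpha} be partial compatible and x its join.
   1. The sequence is monotone (x_c <= x_b for c < b < alpha), because x_c is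
      least in its class [x_c]_c and x_b lies in that class.  Hence for every
      b < alpha the tail {x_c : b <= c < alpha} is cofinal, so x is also its
      join; all tail members are =_b to x_b, so by Axiom 4, x_b =_b x.
   2. Consequently every z in (x]_alpha satisfies x_b =_b z for b < alpha, so
      x_b <= z by leastness of x_b, hence x <= z: x is least in (x]_alpha.
   3. Axiom 3 applied to the empty family yields a <=-least, ⊑_alpha-least
      element of (x]_alpha; it must be x, giving x ⊑_alpha z on (x]_alpha.
   4. If x is least in (x]_alpha, Axiom 1 puts [x]_d inside (x]_alpha for all
      d >= alpha, so x is least in [x]_d; together with 1 this shows that the
      extension of the sequence by x is compatible.
   The file first records elementary facts on well-orders and lattices, then
   develops the consequences of the axioms, and finally assembles the theorem. *)

Lemma lt_of_lt_not_lt (K : WOrd) (a b c : K) :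
  lt K c a -> ~ lt K b a -> lt K c b.
Proof.
  intros hca hba.
  destruct (lt_total K c b) as [hcb | [-> | hbc]].
  - exact hcb.
  - contradiction.
  - exfalso. apply hba. exact (lt_trans K _ _ _ hbc hca).
Qed.

Lemma lt_or_not_lt (K : WOrd) (b a : K) : lt K b a \/ ~ lt K b a.
Proof.
  destruct (lt_total K b a) as [hba | [-> | hab]].
  - left. exact hba.
  - right. apply lt_irrefl.
  - right. intro hba. exact (lt_irrefl K a (lt_trans K _ _ _ hab hba)).
Qed.

Lemma join_cofinal (L : CLat) (X Y : L -> Prop) :
  (forall y, Y y -> X y) ->
  (forall x, X x -> exists y, Y y /\ le L x y) ->
  join L X = join L Y.
Proof.
  intros hYX hcof. apply le_antisym.
  - apply join_least. intros x hx.
    destruct (hcof x hx) as [y [hy hxy]].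
    exact (le_trans L _ _ _ hxy (join_ub L Y y hy)).
  - apply join_least. intros y hy. exact (join_ub L X y (hYX y hy)).
Qed.

Definition partial_join (L : CLat) (K : WOrd) (alpha : K) (xs : K -> L) : L :=
  join L (fun l => exists b, lt K b alpha /\ l = xs b).

Section ModelFacts.
Variables (L : CLat) (K : WOrd) (pre : K -> L -> L -> Prop).
Hypothesis model : is_model L K pre.

Let eqa := eqa L K pre.

Lemma pre_refl (a : K) (x : L) : pre a x x.
Proof. destruct model as [h _]. apply h. Qed.

Lemma pre_trans (a : K) (x y z : L) : pre a x y -> pre a y z -> pre a x z.
Proof. destruct model as [_ [h _]]. apply h. Qed.

Lemma eqa_refl (a : K) (x : L) : eqa a x x.
Proof. split; apply pre_refl. Qed.

Lemma eqa_trans (a : K) (x y z : L) : eqa a x y -> eqa a y z -> eqa a x z.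
Proof. intros [hxy hyx] [hyz hzy]; split; eapply pre_trans; eauto. Qed.

Lemma pre_lower (c d : K) (x y : L) : lt K c d -> pre d x y -> eqa c x y.
Proof. destruct model as [_ [_ [h _]]]. apply h. Qed.

Lemma eqa_join (X : L -> Prop) (a : K) (y : L) :
  (exists x, X x) -> (forall x, X x -> eqa a y x) -> eqa a y (join L X).
Proof. destruct model as [_ [_ [_ [_ [_ h]]]]]. apply h. Qed.

(* From Axiom 3 with the empty family: the <=-least element of (x]_a is also
   ⊑_a-below every element of (x]_a. *)
Lemma downset_least_pre (a : K) (x : L) :
  least_in L (downset L K pre a x) x ->
  forall z, downset L K pre a x z -> pre a x z.
Proof.
  intros [hx hxleast].
  destruct model as [_ [_ [_ [_ [A3 _]]]]].
  destruct (A3 x a (fun _ => False)) as [y [hy [_ hymin]]]; [intros _ []|].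
  assert (hyx : y = x).
  { apply le_antisym.
    - exact (proj2 (hymin x hx (fun _ f => match f with end))).
    - exact (hxleast y hy). }
  subst y. intros z hz. exact (proj1 (hymin z hz (fun _ f => match f with end))).
Qed.

(* Axiom 1 puts [x]_d inside (x]_a when d >= a, so the least element of
   (x]_a is least in its class at every level d >= a. *)
Lemma downset_least_cls (a d : K) (x : L) :
  ~ lt K d a -> least_in L (downset L K pre a x) x ->
  least_in L (cls L K pre d x) x.
Proof.
  intros hda [_ hxleast]. split.
  - apply eqa_refl.
  - intros y [hxy _]. apply hxleast. intros c hca.
    exact (pre_lower c d x y (lt_of_lt_not_lt K a d c hca hda) hxy).
Qed.

Section PartialSequence.
Variables (alpha : K) (xs : K -> L).
Hypothesis hxs : partial_compatible L K pre alpha xs.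

Let x := partial_join L K alpha xs.

(* Each term is least in its class, and later terms are in that class. *)
Lemma partial_compatible_mono (c b : K) :
  lt K c b -> lt K b alpha -> le L (xs c) (xs b).
Proof.
  intros hcb hb. destruct hxs as [hleast hcomp].
  apply (proj2 (hleast c (lt_trans K _ _ _ hcb hb))).
  exact (hcomp c b hcb hb).
Qed.

Lemma partial_join_eqa (b : K) : lt K b alpha -> eqa b (xs b) x.
Proof.
  intros hb.
  set (tail := fun l => exists c, ~ lt K c b /\ lt K c alpha /\ l = xs c).
  assert (hx : x = join L tail).
  { apply join_cofinal.
    - intros l [c [_ [hc ->]]]. exists c; auto.
    - intros l [c [hc ->]].
      destruct (lt_or_not_lt K c b) as [hcb | hcb].
      + exists (xs b). split.
        * exists b. split; [apply lt_irrefl | auto].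
        * exact (partial_compatible_mono c b hcb hb).
      + exists (xs c). split; [exists c; auto | apply le_refl]. }
  rewrite hx. apply eqa_join.
  - exists (xs b). exists b. split; [apply lt_irrefl | auto].
  - intros l [c [hcb [hc ->]]].
    destruct (lt_total K b c) as [hbc | [<- | hcb']].
    + exact (proj2 hxs b c hbc hc).
    + apply eqa_refl.
    + contradiction.
Qed.

Lemma partial_join_least : least_in L (downset L K pre alpha x) x.
Proof.
  split.
  - intros b _. apply eqa_refl.
  - intros z hz. apply join_least. intros l [b [hb ->]].
    apply (proj2 (proj1 hxs b hb)).
    exact (eqa_trans b _ _ _ (partial_join_eqa b hb) (hz b hb)).
Qed.

Lemma extension_compatible (ys : K -> L) :
  (forall d, lt K d alpha -> ys d = xs d) ->
  (forall d, ~ lt K d alpha -> ys d = x) ->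
  compatible L K pre ys.
Proof.
  intros hlow hhigh. split.
  - intros b. destruct (lt_or_not_lt K b alpha) as [hb | hb].
    + rewrite (hlow b hb). exact (proj1 hxs b hb).
    + rewrite (hhigh b hb). exact (downset_least_cls alpha b x hb partial_join_least).
  - intros b c hbc. destruct (lt_or_not_lt K c alpha) as [hc | hc].
    + rewrite (hlow b (lt_trans K _ _ _ hbc hc)), (hlow c hc).
      exact (proj2 hxs b c hbc hc).
    + rewrite (hhigh c hc). destruct (lt_or_not_lt K b alpha) as [hb | hb].
      * rewrite (hlow b hb). exact (partial_join_eqa b hb).
      * rewrite (hhigh b hb). apply eqa_refl.
Qed.

End PartialSequence.
End ModelFacts.

Theorem mainTheorem11 (L : CLat) (K : WOrd) (pre : K -> L -> L -> Prop)
  (hmodel : is_model L K pre) (alpha : K) (xs : K -> L)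
  (hxs : partial_compatible L K pre alpha xs) :
  let x := join L (fun l => exists b, lt K b alpha /\ l = xs b) in
  least_in L (downset L K pre alpha x) x /\
  (forall z, downset L K pre alpha x z -> pre alpha x z) /\
  (forall ys : K -> L,
     (forall d, lt K d alpha -> ys d = xs d) ->
     (forall d, ~ lt K d alpha -> ys d = x) ->
     compatible L K pre ys).
Proof.
  intros x.
  pose proof (partial_join_least L K pre hmodel alpha xs hxs) as hleast.
  split; [exact hleast |].
  split.
  - exact (downset_least_pre L K pre hmodel alpha x hleast).
  - exact (extension_compatible L K pre hmodel alpha xs hxs).
Qed.
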